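(* Let $G$ be a vertex-color-avoiding connected graph on $n$ vertices whose vertices are colored with exactly $k\in\mathbb{Z}_+$ colors. Then $|E(G)|\ge n-1$ if $k\le 2$, and $|E(G)|\ge n$ if $k\ge 3$; moreover these lower bounds are sharp (attained by suitable such graphs).
   Context: Vertex-colorings are arbitrary (not necessarily proper). Two vertices $u,v$ of a vertex-colored graph are vertex-$c$-avoiding connected (for a color $c$) if there is a $u$-$v$ path and either at least one of $u,v$ has color $c$ or some $u$-$v$ path contains no vertex of color $c$. The graph is vertex-color-avoiding connected if any two vertices are vertex-$c$-avoiding connected for every color $c$. *)

From mathcomp Require Import all_boot.
Set Implicit Arguments. Unset Strict Implicit. Unset Printing Implicit Defensive.

(* A finite simple graph: vertex type T : finType, adjacency e : rel T,
   required (in the theorem) to be symmetric and irreflexive. *)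

Definition edge_set (T : finType) (e : rel T) : {set {set T}} :=
  [set [set x; y] | x in T, y in T & e x y].

Definition avoid_rel (T : finType) (k : nat) (e : rel T) (col : T -> 'I_k)
    (c : 'I_k) : rel T :=
  [rel x y | [&& e x y, col x != c & col y != c]].

Definition vc_avoiding_connected (T : finType) (k : nat) (e : rel T)
    (col : T -> 'I_k) (c : 'I_k) (u v : T) : Prop :=
  connect e u v /\
  (col u = c \/ col v = c \/ connect (avoid_rel e col c) u v).

Definition vca_connected (T : finType) (k : nat) (e : rel T)
    (col : T -> 'I_k) : Prop :=
  forall (c : 'I_k) (u v : T), vc_avoiding_connected e col c u v.

Definition uses_exactly (T : finType) (k : nat) (col : T -> 'I_k) : Prop :=
  forall i : 'I_k, exists x, col x = i.

From mathcomp Require Import all_boot zify.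
Set Implicit Arguments. Unset Strict Implicit. Unset Printing Implicit Defensive.

(* A graph that is connected on a set S of vertices has at least |S| - 1
   edges.  For k <= 2 this is applied to the whole graph.  For k >= 3 it is
   applied, for every colour c, to the graph with colour class c deleted,
   which is connected by assumption.  Summing over c, an edge carrying j
   colours is counted k - j times, so n (k - 1) - k <= sum_E (k - |col E|).
   Every edge carries a colour, and as there are three colours at least two
   edges are bichromatic; hence n (k - 1) - k <= m (k - 1) - 2, i.e. n <= m.
   The bounds are attained by colouring vertex i of the path (k <= 2) or of
   the cycle (k >= 3) on n vertices with min(i, k - 1): every colour class is
   a single vertex or a final segment of the path, and removing it leaves a
   connected graph. *)

Section EdgeSets.

Variable T : finType.
Implicit Types (e : rel T) (A S : {set T}).

Lemma edge_setP e E :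
  reflect (exists x y, e x y /\ E = [set x; y]) (E \in edge_set e).
Proof.
apply: (iffP imset2P) => [[x y _] | [x [y [exy ->]]]].
  by rewrite inE => exy ->; exists x, y.
by exists x y; rewrite ?inE.
Qed.

Lemma edge_set_mono e1 e2 : subrel e1 e2 -> edge_set e1 \subset edge_set e2.
Proof.
move=> sub12; apply/subsetP => _ /edge_setP [x [y [exy ->]]].
by apply/edge_setP; exists x, y; split; first exact: sub12.
Qed.

Lemma connect_cross e (A : {pred T}) u v :
  connect e u v -> u \in A -> v \notin A ->
  exists x y, [/\ x \in A, y \notin A & e x y].
Proof.
case/connectP=> p + -> {v}; elim: p u => [|z p IH] u /=; first by move=> _ ->.
case/andP=> euz pz uA; have [zA | zA] := boolP (z \in A); first exact: IH.
by exists u, z.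
Qed.

Definition induced_rel e A : rel T := [rel x y | [&& e x y, x \in A & y \in A]].

Lemma card_edge_set_induced_setU1 e A x z :
  x \in A -> z \notin A -> e x z ->
  #|edge_set (induced_rel e A)| < #|edge_set (induced_rel e (z |: A))|.
Proof.
move=> xA zA exz; apply/proper_card/properP; split.
  apply: edge_set_mono => a b /and3P [eab aA bA].
  by rewrite /induced_rel /= !in_setU1 eab aA bA !orbT.
exists [set x; z].
  by apply/edge_setP; exists x, z; rewrite /induced_rel /= !in_setU1 exz xA eqxx orbT.
apply/negP => /edge_setP [a [b [/and3P [_ aA bA] abE]]].
have : z \in [set a; b] by rewrite -abE set22.
by rewrite !inE => /orP [] /eqP zE; rewrite zE ?aA ?bA in zA.
Qed.

Lemma connected_card_le_edges e S :
  {in S &, forall u v, connect e u v} -> #|S| <= #|edge_set e|.+1.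
Proof.
move=> connS; have [-> | /set0Pn [s sS]] := eqVneq S set0; first by rewrite cards0.
(* Grow A from s along crossing edges: each step adds a vertex and an edge. *)
have finish A : S \subset A ->
    #|A| <= #|edge_set (induced_rel e A)|.+1 -> #|S| <= #|edge_set e|.+1.
  move=> SA cardA; apply: leq_trans (subset_leq_card SA) (leq_trans cardA _).
  by rewrite ltnS subset_leq_card // edge_set_mono // => a b /andP [].
suff grow m A : #|~: A| <= m -> s \in A ->
    #|A| <= #|edge_set (induced_rel e A)|.+1 -> #|S| <= #|edge_set e|.+1.
  by apply: (grow #|T| [set s]); rewrite ?max_card ?set11 ?cards1.
elim: m A => [|m IH] A sizeA sA cardA.
  apply: finish cardA; apply/subsetP => y _.
  move: sizeA; rewrite leqn0 cards_eq0 => /eqP/setP/(_ y).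
  by rewrite !inE; case: (y \in A).
have [SA | /subsetPn [y yS yA]] := boolP (S \subset A); first exact: finish SA cardA.
have [x [z [xA zA exz]]] := connect_cross (connS s y sS yS) sA yA.
apply: (IH (z |: A)).
- by move: sizeA (cardsC A) (cardsC (z |: A)); rewrite cardsU1 zA; lia.
- by rewrite in_setU1 sA orbT.
by rewrite cardsU1 zA ltnS (leq_trans cardA) // (card_edge_set_induced_setU1 xA zA exz).
Qed.

End EdgeSets.

Lemma sum_card_incidence (I J : finType) (A : {set I}) (F : I -> {set J}) :
  \sum_(j : J) #|[set i in A | j \in F i]| = \sum_(i in A) #|F i|.
Proof.
transitivity (\sum_(j : J) \sum_(i in A | j \in F i) 1).
  by apply: eq_bigr => j _; rewrite sum1dep_card.
rewrite (exchange_big_dep (mem A)) /= => [|j i _ /andP [] //].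
apply: eq_bigr => i iA; rewrite sum1dep_card.
by apply: eq_card => j; rewrite inE iA.
Qed.

Lemma card_add_le_sum (I : finType) (A B : {set I}) (f : I -> nat) :
  B \subset A -> {in A, forall i, (i \in B).+1 <= f i} ->
  #|A| + #|B| <= \sum_(i in A) f i.
Proof.
move=> BA fge.
apply: (@leq_trans (\sum_(i in A) (i \in B).+1)); last exact: leq_sum.
under eq_bigr do rewrite -add1n.
rewrite big_split /= sum1_card leq_add2l -sum1_card -big_mkcondr /=.
by apply/eq_leq/eq_bigl => i; rewrite andb_idl // => /(subsetP BA).
Qed.

Lemma imset_set2 (aT rT : finType) (f : aT -> rT) a b :
  f @: [set a; b] = [set f a; f b].
Proof. by rewrite imsetU1 imset_set1. Qed.

Section Colouring.

Variables (T : finType) (e : rel T) (k : nat) (col : T -> 'I_k).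

Lemma edge_set_avoid c :
  edge_set (avoid_rel e col c) = [set E in edge_set e | c \notin col @: E].
Proof.
apply/setP => E; rewrite inE; apply/edge_setP/andP.
  case=> x [y [/and3P [exy xc yc] ->]]; rewrite imset_set2 !inE negb_or.
  by rewrite ![c == _]eq_sym xc yc; split=> //; apply/edge_setP; exists x, y.
case=> /edge_setP [x [y [exy ->]]]; rewrite imset_set2 !inE negb_or.
rewrite ![c == _]eq_sym => /andP [xc yc].
by exists x, y; rewrite /avoid_rel /= exy xc yc.
Qed.

Lemma sum_card_avoid_vertices : \sum_c #|[set x | col x != c]| = #|T| * k.-1.
Proof.
transitivity (\sum_c #|[set x in [set: T] | c \in [set~ col x]]|).
  by apply: eq_bigr => c _; apply: eq_card => x; rewrite !inE eq_sym.
rewrite sum_card_incidence -cardsT -sum_nat_const.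
by apply: eq_bigr => x _; rewrite cardsC1 card_ord.
Qed.

Lemma sum_card_edge_set_avoid :
  \sum_c #|edge_set (avoid_rel e col c)| = \sum_(E in edge_set e) #|~: (col @: E)|.
Proof.
rewrite -sum_card_incidence; apply: eq_bigr => c _; rewrite edge_set_avoid.
by apply: eq_card => E; rewrite !inE.
Qed.

Lemma bichromatic_edge_at c u v :
  connect e u v -> col u = c -> col v != c ->
  exists2 E, E \in edge_set e & c \in col @: E /\ #|col @: E| = 2.
Proof.
move=> euv uc vc.
have [x [y [/eqP xc yc exy]]] :=
  connect_cross (A := [pred x | col x == c]) euv (introT eqP uc) vc.
exists [set x; y]; first by apply/edge_setP; exists x, y.
by rewrite imset_set2 cards2 !inE xc eqxx eq_sym yc.
Qed.

Lemma sum_card_edge_colours_ge :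
  2 < k -> uses_exactly col -> (forall u v, connect e u v) ->
  #|edge_set e| + 2 <= \sum_(E in edge_set e) #|col @: E|.
Proof.
move=> k3 uses conn.
have [u0 u0c] := uses (Ordinal (ltn_trans (isT : 0 < 2) k3)).
have [u1 u1c] := uses (Ordinal (ltn_trans (isT : 1 < 2) k3)).
have u1c0 : col u1 != col u0 by rewrite u0c u1c.
have [E0 E0e [c0E0 E0bi]] := bichromatic_edge_at (conn u0 u1) erefl u1c0.
(* E0 carries two of the k > 2 colours, so some colour j misses it. *)
have /subsetPn [j _ jE0] : ~~ ([set: 'I_k] \subset col @: E0).
  by apply/negP => /subset_leq_card; rewrite cardsT card_ord E0bi; lia.
have [uj ujc] := uses j.
have u0j : col u0 != j by apply: contraNneq jE0 => <-.
have [E1 E1e [jE1 E1bi]] := bichromatic_edge_at (conn uj u0) ujc u0j.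
have E01 : E0 != E1 by apply: contraNneq jE0 => ->.
have <- : #|[set E0; E1]| = 2 by rewrite cards2 E01.
apply: card_add_le_sum => [|E Ee]; first by rewrite subUset !sub1set E0e E1e.
rewrite !inE; case: eqP => [-> | _]; first by rewrite E0bi.
case: eqP => [-> | _]; first by rewrite E1bi.
by case/edge_setP: Ee => x [y [_ ->]]; rewrite imset_set2 cards2.
Qed.

Lemma vca_card_le_edges :
  2 < k -> uses_exactly col -> vca_connected e col -> #|T| <= #|edge_set e|.
Proof.
move=> k3 uses vca.
have conn u v : connect e u v.
  exact: (vca (Ordinal (ltn_trans (isT : 0 < 2) k3)) u v).1.
have avoid_le c : #|[set x | col x != c]| <= #|edge_set (avoid_rel e col c)|.+1.
  apply: connected_card_le_edges => u v; rewrite !inE => /eqP uc /eqP vc.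
  by have [_ [// | [// | //]]] := vca c u v.
have sum_le : #|T| * k.-1 <= \sum_c #|edge_set (avoid_rel e col c)| + k.
  rewrite -sum_card_avoid_vertices -[k in _ + k]card_ord -sum1_card -big_split.
  by apply: leq_sum => c _; rewrite /= addn1.
have split_k : \sum_(E in edge_set e) #|~: (col @: E)|
    + \sum_(E in edge_set e) #|col @: E| = #|edge_set e| * k.
  rewrite -big_split -sum_nat_const /=.
  by apply: eq_bigr => E _; rewrite addnC cardsC card_ord.
move: sum_le split_k (sum_card_edge_colours_ge k3 uses conn).
rewrite sum_card_edge_set_avoid; nia.
Qed.

End Colouring.

Definition add_edge (T : finType) (e : rel T) (a b : T) : rel T :=
  [rel x y | e x y || ([set x; y] == [set a; b])].

Section AddEdge.

Variables (T : finType) (e : rel T) (a b : T).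

Lemma add_edge_sym : symmetric e -> symmetric (add_edge e a b).
Proof. by move=> esym x y; rewrite /add_edge /= esym setUC. Qed.

Lemma add_edge_irr : irreflexive e -> a != b -> irreflexive (add_edge e a b).
Proof.
move=> eirr ab x; rewrite /add_edge /= eirr setUid /=; apply: contraNF ab => /eqP xab.
by have := set21 a b; have := set22 a b; rewrite -xab !inE => /eqP -> /eqP ->.
Qed.

Lemma edge_set_add_edge : edge_set (add_edge e a b) = [set a; b] |: edge_set e.
Proof.
apply/setP => E; rewrite in_setU1; apply/edge_setP/orP.
  case=> x [y [/orP [exy | /eqP xyab] ->]]; last by left; rewrite xyab.
  by right; apply/edge_setP; exists x, y.
case=> [/eqP -> | /edge_setP [x [y [exy ->]]]].
  by exists a, b; split; rewrite // /add_edge /= eqxx orbT.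
by exists x, y; split; rewrite // /add_edge /= exy.
Qed.

End AddEdge.

Definition path_graph n : rel 'I_n :=
  [rel x y : 'I_n | (x.+1 == y :> nat) || (y.+1 == x :> nat)].
Arguments path_graph : clear implicits.

Definition cycle_graph n : rel 'I_n.+1 := add_edge (path_graph n.+1) ord0 ord_max.
Arguments cycle_graph : clear implicits.

Lemma path_graph_sym n : symmetric (path_graph n).
Proof. by move=> x y; rewrite /path_graph /= orbC. Qed.

Lemma path_graph_irr n : irreflexive (path_graph n).
Proof. by move=> x; rewrite /path_graph /= orbb; lia. Qed.

Lemma card_edge_set_path_graph n : #|edge_set (path_graph n.+1)| = n.
Proof.
pose E (i : 'I_n) : {set 'I_n.+1} := [set widen_ord (leqnSn n) i; lift ord0 i].
have E_inj : injective E.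
  move=> i j Eij; apply: val_inj.
  have : widen_ord (leqnSn n) i \in E j by rewrite -Eij set21.
  have : widen_ord (leqnSn n) j \in E i by rewrite Eij set21.
  rewrite !inE -!(inj_eq (@ord_inj _)) !lift0 /=.
  by move=> /orP [] /eqP ? /orP [] /eqP ?; lia.
suff -> : edge_set (path_graph n.+1) = E @: setT by rewrite card_imset // cardsT card_ord.
apply/setP => F; apply/edge_setP/imsetP.
  case=> x [y [/orP [] /eqP xy ->]].
    have xn : x < n by rewrite -ltnS xy.
    by exists (Ordinal xn) => //; congr [set _; _]; apply: val_inj.
  have yn : y < n by rewrite -ltnS xy.
  by exists (Ordinal yn); rewrite // setUC; congr [set _; _]; apply: val_inj.
case=> i _ ->; exists (widen_ord (leqnSn n) i), (lift ord0 i); split=> //.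
by apply/orP; left; rewrite lift0.
Qed.

Lemma card_edge_set_cycle_graph n : 1 < n -> #|edge_set (cycle_graph n)| = n.+1.
Proof.
move=> n2; rewrite edge_set_add_edge cardsU1 card_edge_set_path_graph.
suff -> : [set ord0; ord_max] \notin edge_set (path_graph n.+1) by rewrite add1n.
apply/negP => /edge_setP [x [y [xy Exy]]].
have := set21 (ord0 : 'I_n.+1) ord_max; have := set22 (ord0 : 'I_n.+1) ord_max.
rewrite Exy !inE -!val_eqE /= => /orP [] /eqP ? /orP [] /eqP ?.
all: by move: xy; rewrite /path_graph /=; lia.
Qed.

Lemma connect_interval n (r : rel 'I_n) (a b : nat) :
  symmetric r -> (forall x y : 'I_n, a <= x -> y <= b -> x.+1 = y :> nat -> r x y) ->
  forall x y : 'I_n, a <= x <= b -> a <= y <= b -> connect r x y.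
Proof.
move=> rsym rstep.
suff up (x y : 'I_n) : a <= x -> x <= y <= b -> connect r x y.
  move=> x y /andP [ax xb] /andP [ay yb]; have [xy | /ltnW yx] := leqP x y.
    by apply: up; rewrite ?xy.
  by rewrite (sym_connect_sym rsym); apply: up; rewrite ?yx.
move=> ax /andP [xy yb]; have [d yE] : exists d, y = x + d :> nat by exists (y - x); lia.
elim: d y yE yb {xy} => [|d IH] y yE yb.
  by have -> : y = x by apply: ord_inj; rewrite yE addn0.
have y'n : x + d < n by rewrite (leq_trans _ (ltn_ord y)) // yE addnS.
apply: connect_trans (IH (Ordinal y'n) erefl _) (connect1 (rstep _ _ _ _ _)) => /=; lia.
Qed.

Definition minn_colouring n k (x : 'I_n) : 'I_k.+1 := inord (minn x k).
Arguments minn_colouring {n} k x.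

Lemma minn_colouringE n k (x : 'I_n) : minn_colouring k x = minn x k :> nat.
Proof. by rewrite inordK // ltnS geq_minr. Qed.

Lemma minn_colouring_onto n k : k < n -> uses_exactly (@minn_colouring n k).
Proof.
move=> kn i; exists (Ordinal (leq_trans (ltn_ord i) kn)); apply: ord_inj.
by rewrite minn_colouringE /=; apply/minn_idPl; rewrite -ltnS.
Qed.

Lemma avoid_rel_sym (T : finType) k (e : rel T) (col : T -> 'I_k) c :
  symmetric e -> symmetric (avoid_rel e col c).
Proof. by move=> esym x y; rewrite /avoid_rel /= esym [(col x != c) && _]andbC. Qed.

Section MinnColouring.

Variables (n k : nat) (e : rel 'I_n.+1).
Hypotheses (kn : k <= n) (esym : symmetric e) (path_e : subrel (path_graph n.+1) e).
Let col := @minn_colouring n.+1 k.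

Lemma connect_avoid_interval (c : 'I_k.+1) a b :
  (forall z : 'I_n.+1, a <= z <= b -> minn z k != c) ->
  forall x y : 'I_n.+1, a <= x <= b -> a <= y <= b -> connect (avoid_rel e col c) x y.
Proof.
move=> noc; apply: connect_interval; first exact: avoid_rel_sym.
move=> x y ax yb xy; rewrite /avoid_rel /= -!val_eqE /= !minn_colouringE.
by rewrite !noc ?path_e /path_graph /= ?xy ?eqxx //; lia.
Qed.

Lemma connect_avoid_max_colour (x y : 'I_n.+1) :
  col x != ord_max -> col y != ord_max -> connect (avoid_rel e col ord_max) x y.
Proof.
rewrite -!val_eqE /= !minn_colouringE => xk yk.
by apply: (connect_avoid_interval (a := 0) (b := k.-1)) => [z||] /=; lia.
Qed.

Lemma connect_avoid_small_colour (c : 'I_k.+1) (x : 'I_n.+1) :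
  c < k -> (0 < c -> e ord0 ord_max) -> col x != c ->
  connect (avoid_rel e col c) x ord_max.
Proof.
move=> ck wrap; rewrite -val_eqE /= minn_colouringE => xc.
have right (z : 'I_n.+1) : c < z -> connect (avoid_rel e col c) z ord_max.
  move=> cz; have zn := ltn_ord z.
  by apply: (connect_avoid_interval (a := c.+1) (b := n)) => [w||] /=; lia.
case: (ltngtP x c) => [xc' | /right // | xE]; last by move: xc; rewrite xE; lia.
have c0 : 0 < c by lia.
apply: (@connect_trans _ _ ord0).
  by apply: (connect_avoid_interval (a := 0) (b := c.-1)) => [w||] /=; lia.
apply: connect1; rewrite /avoid_rel /= wrap // -!val_eqE /= !minn_colouringE.
by rewrite min0n (minn_idPr kn); lia.
Qed.

Lemma vca_connected_minn_colouring :
  (1 < k -> e ord0 ord_max) -> vca_connected e col.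
Proof.
move=> wrap c u v; split.
  apply: (connect_interval (a := 0) (b := n)) => // [x y _ _ xy | | ];
    by [apply: path_e; rewrite /path_graph /= xy eqxx | rewrite leq0n /= -ltnS ltn_ord].
have [uc | uc] := eqVneq (col u) c; first by left.
have [vc | vc] := eqVneq (col v) c; first by right; left.
right; right; case: (ltnP c k) => [ck | kc].
  have wrap' : 0 < c -> e ord0 ord_max by move=> c0; apply: wrap; lia.
  apply: connect_trans (connect_avoid_small_colour ck wrap' uc) _.
  by rewrite (sym_connect_sym (avoid_rel_sym _ _ esym)) connect_avoid_small_colour.
have cmax : c = ord_max by apply: val_inj; move: (ltn_ord c) kc => /=; lia.
by rewrite cmax in uc vc *; apply: connect_avoid_max_colour.
Qed.

End MinnColouring.

Lemma vca_sharp_example n k : 0 < k -> k <= n ->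
  exists (e : rel 'I_n) (col : 'I_n -> 'I_k),
    [/\ symmetric e, irreflexive e, uses_exactly col, vca_connected e col &
        #|edge_set e| = (if k <= 2 then n - 1 else n)].
Proof.
case: n => [|n]; first by case: k.
case: k => [// | k] _; rewrite ltnS => kn.
have onto := minn_colouring_onto (kn : k < n.+1).
have path_cycle : subrel (path_graph n.+1) (cycle_graph n).
  by move=> x y pxy; rewrite /cycle_graph /add_edge /= pxy.
case: ifP => [k1 | k2].
  exists (path_graph n.+1), (minn_colouring k); split=> //.
  - exact: path_graph_sym.
  - exact: path_graph_irr.
  - by apply: vca_connected_minn_colouring => //; [exact: path_graph_sym | lia].
  - by rewrite card_edge_set_path_graph subn1.
exists (cycle_graph n), (minn_colouring k); split=> //.
- exact/add_edge_sym/path_graph_sym.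
- by apply/add_edge_irr; [exact: path_graph_irr | rewrite -val_eqE /=; lia].
- apply: vca_connected_minn_colouring => //; first exact/add_edge_sym/path_graph_sym.
  by rewrite /cycle_graph /add_edge /= eqxx orbT.
- by rewrite card_edge_set_cycle_graph //; lia.
Qed.

Theorem theorem3p11 :
  (forall (T : finType) (e : rel T) (k : nat) (col : T -> 'I_k),
      symmetric e -> irreflexive e -> 0 < k -> uses_exactly col ->
      vca_connected e col ->
      (if k <= 2 then #|T| - 1 else #|T|) <= #|edge_set e|)
  /\
  (forall n k : nat, 0 < k -> k <= n ->
      exists (e : rel 'I_n) (col : 'I_n -> 'I_k),
        [/\ symmetric e, irreflexive e, uses_exactly col,
            vca_connected e col &
            #|edge_set e| = (if k <= 2 then n - 1 else n)]).
Proof.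
split; last exact: vca_sharp_example.
move=> T e k col _ _ k0 uses vca.
case: (leqP k 2) => [_ | k3]; last exact: vca_card_le_edges k3 uses vca.
have conn : {in [set: T] &, forall u v, connect e u v}.
  by move=> u v _ _; exact: (vca (Ordinal k0) u v).1.
by have := connected_card_le_edges conn; rewrite cardsT; lia.
Qed.
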